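(* Let $n=2m-1$ be odd, fix $\boldsymbol{\rho}^0\in\mathcal{P}_n$ and $\alpha\in(0,\infty)$, and let $\mathbf{R}\sim\mathrm{Mallows}(\boldsymbol{\rho}^0,\alpha)$ with the footrule distance. For $i=1,\dots,n$ let $o^0_i$ be the item with $\rho^0_{o^0_i}=i$. Then $$\mathbb{E}[R_{o^0_m}\mid\boldsymbol{\rho}^0,\alpha]=\rho^0_{o^0_m}=m.$$
   Context: $\mathcal{P}_n$ denotes the set of permutations of $\{1,\dots,n\}$; a ranking $\mathbf{r}\in\mathcal{P}_n$ assigns rank $r_i$ to item $i$. The footrule distance is $d(\mathbf{r},\boldsymbol{\rho})=\sum_{i=1}^n|r_i-\rho_i|$. The Mallows distribution $\mathrm{Mallows}(\boldsymbol{\rho}^0,\alpha)$ on $\mathcal{P}_n$ has probability mass function $P(\mathbf{R}=\mathbf{r}\mid\boldsymbol{\rho}^0,\alpha)=\frac{1}{Z_n(\alpha)}\exp\{-\frac{\alpha}{n}d(\mathbf{r},\boldsymbol{\rho}^0)\}$ with normalizing constant $Z_n(\alpha)$. *)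

From mathcomp Require Import all_boot all_order all_algebra all_fingroup.
From mathcomp Require Import all_classical all_reals all_analysis.
Set Implicit Arguments. Unset Strict Implicit. Unset Printing Implicit Defensive.
Import Order.TTheory GRing.Theory Num.Theory.
Local Open Scope ring_scope.

(* Rankings of n items are permutations r : {perm 'I_n}; item i : 'I_n
   (item i+1 in the paper) gets rank (r i).+1 in {1,...,n}. *)

(* Footrule distance d(r, rho) = sum_i |r_i - rho_i| (shifting both ranks by 1
   does not change the differences). *)
Definition footrule (n : nat) (r rho : {perm 'I_n}) : nat :=
  \sum_(i < n) `|(r i)%:Z - (rho i)%:Z|%N.

Definition mallows_Z (R : realType) (n : nat) (rho0 : {perm 'I_n}) (alpha : R) : R :=
  \sum_(r : {perm 'I_n}) expR (- (alpha / n%:R) * (footrule r rho0)%:R).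

Definition mallows_pmf (R : realType) (n : nat) (rho0 : {perm 'I_n}) (alpha : R)
  (r : {perm 'I_n}) : R :=
  expR (- (alpha / n%:R) * (footrule r rho0)%:R) / mallows_Z rho0 alpha.

Definition mallows_exp_rank (R : realType) (n : nat) (rho0 : {perm 'I_n}) (alpha : R)
  (j : 'I_n) : R :=
  \sum_(r : {perm 'I_n}) mallows_pmf rho0 alpha r * ((r j).+1)%:R.

From mathcomp Require Import all_boot all_order all_algebra all_fingroup.
From mathcomp Require Import all_classical all_reals all_analysis.
From mathcomp Require Import zify lra.
Set Implicit Arguments. Unset Strict Implicit. Unset Printing Implicit Defensive.
Import Order.TTheory GRing.Theory Num.Theory.
Local Open Scope ring_scope.

(* Reversing all ranks and relabelling each item by the item whose
   rho-rank is reversed, r |-> mirror_ranking r, preserves the footrule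
   distance to rho and hence the Mallows law.  Under this bijection the rank
   R_j of item j becomes n + 1 - R_(rank_mirror j), so
   E[R_(rank_mirror j)] = n + 1 - E[R_j].  For n = 2m - 1 the item of
   rho-rank m is its own mirror image, so its expected rank is (n + 1)/2 = m. *)

Lemma distn_rev_ord n (a b : 'I_n) :
  `|(rev_ord a)%:Z - (rev_ord b)%:Z|%N = `|a%:Z - b%:Z|%N.
Proof. by case: a b => [a lt_an] [b lt_bn] /=; lia. Qed.

Section Mirror.
Variable n : nat.

Definition rev_perm : {perm 'I_n} := perm (@rev_ord_inj n).

Variable rho : {perm 'I_n}.

Definition rank_mirror : {perm 'I_n} := (rho * rev_perm * rho^-1)%g.

Definition mirror_ranking (r : {perm 'I_n}) : {perm 'I_n} :=
  (rank_mirror * r * rev_perm)%g.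

Lemma rank_mirrorE i : rho (rank_mirror i) = rev_ord (rho i).
Proof. by rewrite !permM permKV permE. Qed.

Lemma rank_mirrorK : involutive rank_mirror.
Proof. by move=> i; apply: (@perm_inj _ rho); rewrite !rank_mirrorE rev_ordK. Qed.

Lemma mirror_rankingE r i : mirror_ranking r i = rev_ord (r (rank_mirror i)).
Proof. by rewrite !permM permE. Qed.

Lemma mirror_ranking_inj : injective mirror_ranking.
Proof. by move=> r s /mulIg /mulgI. Qed.

Lemma footrule_mirror r : footrule (mirror_ranking r) rho = footrule r rho.
Proof.
rewrite /footrule [RHS](reindex_inj (@perm_inj _ rank_mirror)) /=.
apply: eq_bigr => i _.
by rewrite mirror_rankingE rank_mirrorE -[in RHS]distn_rev_ord rev_ordK.
Qed.

End Mirror.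

Section MallowsSymmetry.
Variables (R : realType) (n : nat) (rho : {perm 'I_n}) (alpha : R).

Lemma mallows_Z_gt0 : 0 < mallows_Z rho alpha.
Proof.
rewrite /mallows_Z (bigD1 1%g) //= ltr_pwDl ?expR_gt0 //.
by apply: sumr_ge0 => r _; rewrite ltW ?expR_gt0.
Qed.

Lemma mallows_pmf_sum1 : \sum_r mallows_pmf rho alpha r = 1.
Proof. by rewrite -mulr_suml divff // gt_eqF ?mallows_Z_gt0. Qed.

Lemma mallows_pmf_mirror r :
  mallows_pmf rho alpha (mirror_ranking rho r) = mallows_pmf rho alpha r.
Proof. by rewrite /mallows_pmf footrule_mirror. Qed.

Lemma mallows_exp_rank_mirror j :
  mallows_exp_rank rho alpha (rank_mirror rho j)
  = n.+1%:R - mallows_exp_rank rho alpha j.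
Proof.
rewrite /mallows_exp_rank (reindex_inj (@mirror_ranking_inj _ rho)) /=.
have -> : n.+1%:R = \sum_r mallows_pmf rho alpha r * n.+1%:R.
  by rewrite -mulr_suml mallows_pmf_sum1 mul1r.
rewrite -sumrB; apply: eq_bigr => r _.
rewrite mallows_pmf_mirror mirror_rankingE rank_mirrorK -mulrBr.
by rewrite -natrB ?subSS /= ?subnSK //; exact/ltnW/ltn_ord.
Qed.

End MallowsSymmetry.

Lemma rank_mirror_middle k (rho : {perm 'I_(k.*2.+1)}) :
  rank_mirror rho ((rho^-1)%g (inord k)) = (rho^-1)%g (inord k).
Proof.
apply: (@perm_inj _ rho); rewrite rank_mirrorE permKV; apply: val_inj => /=.
by rewrite inordK; lia.
Qed.

Theorem mainTheorem4 (R : realType) (k : nat) (rho0 : {perm 'I_(k.*2.+1)}) (alpha : R) :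
  0 < alpha ->
  let m := k.+1 in
  let o0m := (rho0^-1)%g (inord k) in
  mallows_exp_rank rho0 alpha o0m = ((rho0 o0m).+1)%:R /\
  ((rho0 o0m).+1)%:R = m%:R :> R.
Proof.
move=> _ m o0m.
have rank_o0m : rho0 o0m = k :> nat by rewrite permKV inordK //; lia.
have ranks_sum : k.*2.+2%:R = 2 * k.+1%:R :> R.
  by rewrite mulr_natl -mulrnA muln2 doubleS.
have := mallows_exp_rank_mirror rho0 alpha o0m.
rewrite rank_mirror_middle -/o0m ranks_sum rank_o0m => E_mid.
by split; first lra.
Qed.
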